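(* Let $V$ be a finite set and $A,B\subseteq V$ with $A\cap B\neq\emptyset$, and let $\lambda,\lambda'\in\mathbb{C}$. Then $$f_A^{(\lambda)}f_B^{(\lambda)}=\begin{cases}f_{A\cup B}^{(\lambda)}&\text{if }|A\cap B|=1,\\0&\text{if }|A\cap B|\ge2,\end{cases}$$ and more generally $$f_A^{(\lambda)}f_B^{(\lambda')}=\begin{cases}f_{A\cup B}^{(\lambda'')}&\text{if }|A\cap B|=1,\\0&\text{if }|A\cap B|\ge2,\end{cases}\qquad \lambda''=\frac{(|A|-1)\lambda+(|B|-1)\lambda'}{|A|+|B|-2}=\frac{(|A|-1)\lambda+(|B|-1)\lambda'}{|A\cup B|-1}.$$
   Context: For each $i\in V$ let $\psi_i,\bar\psi_i$ be anticommuting generators of a Grassmann algebra over $\mathbb{C}$. For $A\subseteq V$, $\tau_A=\prod_{i\in A}\bar\psi_i\psi_i$ ($\tau_\emptyset=1$), and for $\lambda\in\mathbb{C}$, $f_A^{(\lambda)}=\lambda(1-|A|)\tau_A+\sum_{i\in A}\tau_{A\setminus\{i\}}-\sum_{i,j\in A,\ i\neq j}\bar\psi_i\psi_j\,\tau_{A\setminus\{i,j\}}$. *)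

From HB Require Import structures.
From mathcomp Require Import all_boot all_order all_algebra.
From mathcomp Require Import reals complex.
Set Implicit Arguments. Unset Strict Implicit. Unset Printing Implicit Defensive.
Import Order.TTheory GRing.Theory Num.Theory.
Local Open Scope ring_scope.

(* Grassmann (exterior) algebra over a field F on a finite set G of
   anticommuting generators, realized concretely on the basis of monomials
   e_S (S : {set G}), where e_S = g_{s1} ... g_{sk} with s1 < ... < sk in the
   enumeration order of G.  An element is its coefficient function. *)
Section Grassmann.
Variables (F : fieldType) (G : finType).

Local Notation grass := {ffun {set G} -> F}.

(* sign of e_S e_T = (-1)^{#{(s,t) : s in S, t in T, t < s}} e_{S u T}
   when S, T disjoint *)
Definition gsign (S T : {set G}) : F :=
  (-1) ^+ #|[set p : G * G | [&& p.1 \in S, p.2 \in T &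
                                 (enum_rank p.2 < enum_rank p.1)%N]]|.

Definition gmul (x y : grass) : grass :=
  [ffun U : {set G} => \sum_(S : {set G}) \sum_(T : {set G} |
       (S :|: T == U) && [disjoint S & T]) gsign S T * x S * y T].

Definition gscale (c : F) (x : grass) : grass := [ffun U : {set G} => c * x U].

Definition gone : grass := [ffun U : {set G} => (U == set0)%:R].

Definition ggen (g : G) : grass := [ffun U : {set G} => (U == [set g])%:R].

End Grassmann.

Section Fermions.
Variables (F : fieldType) (V : finType).

Definition psi (i : V) : {ffun {set (bool * V)%type} -> F} := ggen F (false, i).
Definition psibar (i : V) : {ffun {set (bool * V)%type} -> F} := ggen F (true, i).

Definition tau (A : {set V}) : {ffun {set (bool * V)%type} -> F} :=
  \big[@gmul F _/gone F _]_(i in A) gmul (psibar i) (psi i).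

Definition fA (lam : F) (A : {set V}) : {ffun {set (bool * V)%type} -> F} :=
  gscale (lam * (1 - #|A|%:R)) (tau A)
  + \sum_(i in A) tau (A :\ i)
  - \sum_(i in A) \sum_(j in A | j != i)
        gmul (gmul (psibar i) (psi j)) (tau (A :\ i :\ j)).

End Fermions.

(* The products psibar_i psi_j are even, so they generate a commutative
   subring of the Grassmann algebra, in which u_ij := psibar_i psi_j obeys
   u_ij u_ij' = u_ij u_i'j = 0 and u_ij u_kl = - u_il u_kj, with t_i := u_ii.
   All computations then happen in an abstract commutative ring with such
   elements, where f_A is c t_A + sum_i t_{A-i} - sum_{i<>j} u_ij t_{A-i-j}.
   If A and B meet in a single point k, f_B factors as f_{B-l} f_{[k,l]} for
   any l in B-A, and multiplying by f_{[k,l]} just adds l to the set (and the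
   constants add); induction on |B| gives f_A f_B = f_{A u B}.  If A and B
   share two points k, l, both factor through f_{[k,l]}, whose square is 0. *)
From HB Require Import structures.
From mathcomp Require Import all_boot all_order all_algebra.
From mathcomp Require Import reals complex.
From mathcomp Require Import ring zify.
Set Implicit Arguments. Unset Strict Implicit. Unset Printing Implicit Defensive.
Import Order.TTheory GRing.Theory Num.Theory.
Local Open Scope ring_scope.

Section GrassmannMul.
Variables (F : fieldType) (G : finType).
Local Notation grass := {ffun {set G} -> F}.
Implicit Types (x y z : grass) (S T U W : {set G}).

Definition gbasis S : grass := [ffun U => (U == S)%:R].

Lemma grass_expand x : x = \sum_S gscale (x S) (gbasis S).
Proof.
apply/ffunP => U; rewrite sum_ffunE (bigD1 U) //= big1 ?addr0.
  by rewrite !ffunE eqxx mulr1.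
by move=> S /negbTE SU; rewrite !ffunE eq_sym SU mulr0.
Qed.

Lemma gscale0 a : gscale a (0 : grass) = 0.
Proof. by apply/ffunP => U; rewrite !ffunE mulr0. Qed.

Lemma gscale0l x : gscale 0 x = 0.
Proof. by apply/ffunP => U; rewrite !ffunE mul0r. Qed.

Lemma gscale1 x : gscale 1 x = x.
Proof. by apply/ffunP => U; rewrite ffunE mul1r. Qed.

Lemma gscaleA a b x : gscale a (gscale b x) = gscale (a * b) x.
Proof. by apply/ffunP => U; rewrite !ffunE mulrA. Qed.

Lemma gscale_sumr a (I : Type) (r : seq I) (P : pred I) (f : I -> grass) :
  gscale a (\sum_(i <- r | P i) f i) = \sum_(i <- r | P i) gscale a (f i).
Proof.
apply/ffunP => U; rewrite !ffunE !sum_ffunE mulr_sumr.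
by apply: eq_bigr => i _; rewrite ffunE.
Qed.

Lemma gmulDl x y z : gmul (x + y) z = gmul x z + gmul y z.
Proof.
apply/ffunP => U; rewrite !ffunE -big_split /=; apply: eq_bigr => S _.
by rewrite -big_split /=; apply: eq_bigr => T _; rewrite !ffunE; ring.
Qed.

Lemma gmulDr x y z : gmul x (y + z) = gmul x y + gmul x z.
Proof.
apply/ffunP => U; rewrite !ffunE -big_split /=; apply: eq_bigr => S _.
by rewrite -big_split /=; apply: eq_bigr => T _; rewrite !ffunE; ring.
Qed.

Lemma gmulZl a x y : gmul (gscale a x) y = gscale a (gmul x y).
Proof.
apply/ffunP => U; rewrite !ffunE mulr_sumr; apply: eq_bigr => S _.
by rewrite mulr_sumr; apply: eq_bigr => T _; rewrite !ffunE; ring.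
Qed.

Lemma gmulZr a x y : gmul x (gscale a y) = gscale a (gmul x y).
Proof.
apply/ffunP => U; rewrite !ffunE mulr_sumr; apply: eq_bigr => S _.
by rewrite mulr_sumr; apply: eq_bigr => T _; rewrite !ffunE; ring.
Qed.

Lemma gmul0l x : gmul 0 x = 0.
Proof.
apply/ffunP => U; rewrite !ffunE big1 // => S _.
by rewrite big1 // => T _; rewrite ffunE mulr0 mul0r.
Qed.

Lemma gmul0r x : gmul x 0 = 0.
Proof.
apply/ffunP => U; rewrite !ffunE big1 // => S _.
by rewrite big1 // => T _; rewrite ffunE mulr0.
Qed.

Lemma gmul_suml (I : Type) (r : seq I) (P : pred I) (f : I -> grass) y :
  gmul (\sum_(i <- r | P i) f i) y = \sum_(i <- r | P i) gmul (f i) y.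
Proof. by elim/big_rec2: _ => [|i a b _ <-]; rewrite ?gmul0l ?gmulDl. Qed.

Lemma gmul_sumr (I : Type) (r : seq I) (P : pred I) (f : I -> grass) y :
  gmul y (\sum_(i <- r | P i) f i) = \sum_(i <- r | P i) gmul y (f i).
Proof. by elim/big_rec2: _ => [|i a b _ <-]; rewrite ?gmul0r ?gmulDr. Qed.

Lemma gmul_basis S T : gmul (gbasis S) (gbasis T) =
  if [disjoint S & T] then gscale (gsign F S T) (gbasis (S :|: T)) else 0.
Proof.
apply/ffunP => U; rewrite ffunE (bigD1 S) //= [X in _ + X]big1 ?addr0; last first.
  by move=> S' /negbTE SS; apply: big1 => T' _; rewrite !ffunE SS mulr0 mul0r.
rewrite big_mkcond (bigD1 T) //= [X in _ + X]big1 ?addr0; last first.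
  by move=> T' /negbTE TT; case: ifP => // _; rewrite !ffunE TT mulr0.
rewrite !ffunE !eqxx !mulr1; case: (boolP [disjoint S & T]) => dST;
  rewrite ?andbT ?andbF ?ffunE //.
by rewrite eq_sym; case: (U == _); rewrite ?mulr1 ?mulr0.
Qed.

Lemma gmul_expand x y :
  gmul x y = \sum_S \sum_T gscale (x S * y T) (gmul (gbasis S) (gbasis T)).
Proof.
rewrite {1}(grass_expand x) gmul_suml; apply: eq_bigr => S _.
rewrite {1}(grass_expand y) gmul_sumr; apply: eq_bigr => T _.
by rewrite gmulZl gmulZr !gscaleA mulrC.
Qed.

Definition inversions S T := [set p : G * G | [&& p.1 \in S, p.2 \in T &
                                 (enum_rank p.2 < enum_rank p.1)%N]].

Lemma gsignE S T : gsign F S T = (-1) ^+ #|inversions S T|.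
Proof. by []. Qed.

Lemma gsign0l T : gsign F set0 T = 1.
Proof.
rewrite gsignE (_ : inversions set0 T = set0) ?cards0 //.
by apply/setP => p; rewrite !inE.
Qed.

Lemma gsign0r T : gsign F T set0 = 1.
Proof.
rewrite gsignE (_ : inversions T set0 = set0) ?cards0 //.
by apply/setP => p; rewrite !inE andbF.
Qed.

Lemma cardsU_disjoint (T' : finType) (A B : {set T'}) :
  [disjoint A & B] -> #|A :|: B| = (#|A| + #|B|)%N.
Proof. by move=> dAB; rewrite cardsU (disjoint_setI0 dAB) cards0 subn0. Qed.

Lemma gsignUl S T W : [disjoint S & T] ->
  gsign F (S :|: T) W = gsign F S W * gsign F T W.
Proof.
move=> dST; rewrite !gsignE -exprD; congr (_ ^+ _).
have -> : inversions (S :|: T) W = inversions S W :|: inversions T W.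
  apply/setP => p; rewrite !inE.
  by case: (p.1 \in S); case: (p.1 \in T); rewrite /= ?orbb ?orbF.
apply: cardsU_disjoint; rewrite -setI_eq0; apply/eqP/setP => -[a b].
rewrite !inE /=; case: (boolP (a \in S)) => aS //=.
by rewrite (disjointFr dST aS) andbF.
Qed.

Lemma gsignUr S T W : [disjoint T & W] ->
  gsign F S (T :|: W) = gsign F S T * gsign F S W.
Proof.
move=> dTW; rewrite !gsignE -exprD; congr (_ ^+ _).
have -> : inversions S (T :|: W) = inversions S T :|: inversions S W.
  apply/setP => p; rewrite !inE.
  by case: (p.2 \in T); case: (p.2 \in W); rewrite /= ?andbF ?orbF ?orbb.
apply: cardsU_disjoint; rewrite -setI_eq0; apply/eqP/setP => -[a b].
rewrite !inE /=; case: (boolP (b \in T)) => bT; rewrite ?andbF //=.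
by rewrite (disjointFr dTW bT) !andbF.
Qed.

(* An inversion of (S, T) or of (T, S) is, up to swapping, a pair of S x T. *)
Lemma gsignC S T : [disjoint S & T] ->
  gsign F S T * gsign F T S = (-1) ^+ (#|S| * #|T|).
Proof.
move=> dST; rewrite !gsignE -exprD; congr (_ ^+ _).
pose swap (p : G * G) := (p.2, p.1).
have swapK : involutive swap by case.
pose Q := [set p : G * G | [&& p.1 \in S, p.2 \in T &
                                 (enum_rank p.1 < enum_rank p.2)%N]].
have -> : inversions T S = swap @^-1: Q.
  by apply/setP => -[a b]; rewrite !inE /= andbCA.
rewrite card_preimset; last exact: (can_inj swapK).
have -> : (#|S| * #|T|)%N = #|inversions S T :|: Q|.
  rewrite -cardsX; apply: eq_card => -[a b]; rewrite !inE /=.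
  case: (boolP (a \in S)) => aS //=; case: (boolP (b \in T)) => bT //=.
  rewrite -neq_ltn; apply/esym/negP => /eqP/ord_inj/enum_rank_inj ab.
  by rewrite ab (disjointFr dST aS) in bT.
rewrite cardsU_disjoint // -setI_eq0; apply/eqP/setP => -[a b]; rewrite !inE /=.
by case: (a \in S); case: (b \in T) => //=; case: ltngtP.
Qed.

Lemma gsign_swap S T : [disjoint S & T] ->
  gsign F T S = (-1) ^+ (#|S| * #|T|) * gsign F S T.
Proof. by move=> dST; rewrite -(gsignC dST) mulrAC -expr2 gsignE sqrr_sign mul1r. Qed.

Lemma gmulA_basis S T W :
  gmul (gmul (gbasis S) (gbasis T)) (gbasis W) =
  gmul (gbasis S) (gmul (gbasis T) (gbasis W)).
Proof.
have dUl (X Y Z : {set G}) :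
    [disjoint X :|: Y & Z] = [disjoint X & Z] && [disjoint Y & Z].
  by rewrite -!setI_eq0 setIUl setU_eq0.
have dUr (X Y Z : {set G}) :
    [disjoint Z & X :|: Y] = [disjoint Z & X] && [disjoint Z & Y].
  by rewrite -!setI_eq0 setIUr setU_eq0.
rewrite !gmul_basis; case: (boolP [disjoint S & T]) => dST;
  case: (boolP [disjoint T & W]) => dTW;
  rewrite ?gmulZl ?gmulZr ?gmul0l ?gmul0r ?gmul_basis ?dUl ?dUr ?dST ?dTW
     ?(negbTE dST) ?(negbTE dTW) ?andbF ?gscale0 //=.
case: (boolP [disjoint S & W]) => dSW; rewrite ?gscale0 //.
by rewrite !gscaleA gsignUl // gsignUr // setUA; congr gscale; ring.
Qed.

Lemma gmulA x y z : gmul (gmul x y) z = gmul x (gmul y z).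
Proof.
have -> : gmul (gmul x y) z = \sum_S \sum_T \sum_W
    gscale (x S * y T * z W) (gmul (gmul (gbasis S) (gbasis T)) (gbasis W)).
  rewrite (gmul_expand x y) gmul_suml; apply: eq_bigr => S _.
  rewrite gmul_suml; apply: eq_bigr => T _.
  rewrite gmulZl {1}(grass_expand z) gmul_sumr gscale_sumr.
  by apply: eq_bigr => W _; rewrite gmulZr gscaleA.
have -> : gmul x (gmul y z) = \sum_S \sum_T \sum_W
    gscale (x S * y T * z W) (gmul (gbasis S) (gmul (gbasis T) (gbasis W))).
  rewrite (gmul_expand y z) {1}(grass_expand x) gmul_suml; apply: eq_bigr => S _.
  rewrite gmulZl gmul_sumr gscale_sumr; apply: eq_bigr => T _.
  rewrite gmul_sumr gscale_sumr; apply: eq_bigr => W _.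
  by rewrite gmulZr gscaleA mulrA.
by apply: eq_bigr => S _; apply: eq_bigr => T _; apply: eq_bigr => W _;
  rewrite gmulA_basis.
Qed.

Lemma gmul1l x : gmul (gone F G) x = x.
Proof.
rewrite -[gone F G]/(gbasis set0) {1}(grass_expand x) gmul_sumr [RHS]grass_expand.
apply: eq_bigr => T _; rewrite gmulZr gmul_basis -setI_eq0 set0I eqxx.
by rewrite gsign0l set0U gscale1.
Qed.

Lemma gmul1r x : gmul x (gone F G) = x.
Proof.
rewrite -[gone F G]/(gbasis set0) {1}(grass_expand x) gmul_suml [RHS]grass_expand.
apply: eq_bigr => T _; rewrite gmulZl gmul_basis -setI_eq0 setI0 eqxx.
by rewrite gsign0r setU0 gscale1.
Qed.

Lemma gone_neq0 : gone F G != 0.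
Proof.
by apply/eqP => /ffunP /(_ set0); rewrite !ffunE eqxx => /eqP; rewrite oner_eq0.
Qed.

Definition even_grass x := [forall U : {set G}, odd #|U| ==> (x U == 0)].

Lemma even_grassP x : reflect (forall U, odd #|U| -> x U = 0) (even_grass x).
Proof.
apply: (iffP forallP) => [h U oU|h U]; first by apply/eqP; move: (h U); rewrite oU.
by apply/implyP => /h ->.
Qed.

Lemma even_gmulC x y : even_grass x -> gmul x y = gmul y x.
Proof.
move/even_grassP => ex; rewrite gmul_expand (gmul_expand y x) exchange_big /=.
apply: eq_bigr => T _; apply: eq_bigr => S _.
case: (boolP (odd #|S|)) => oS; first by rewrite ex // mul0r mulr0 !gscale0l.
rewrite mulrC !gmul_basis disjoint_sym setUC; case: ifP => dTS //.
by rewrite (gsign_swap dTS) -signr_odd oddM (negbTE oS) andbF expr0 mul1r.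
Qed.

Lemma even_gmul x y : even_grass x -> even_grass y -> even_grass (gmul x y).
Proof.
move/even_grassP => ex /even_grassP ey; apply/even_grassP => U oU.
rewrite ffunE big1 // => S _; apply: big1 => T /andP[/eqP SU dST].
case: (boolP (odd #|S|)) => oS; first by rewrite ex ?mulr0 ?mul0r.
have oT : odd #|T| by move: oU; rewrite -SU cardsU_disjoint // oddD (negbTE oS).
by rewrite ey // mulr0.
Qed.

Lemma even_gbasis S : ~~ odd #|S| -> even_grass (gbasis S).
Proof.
move=> oS; apply/even_grassP => U oU; rewrite ffunE; case: eqP => // US.
by rewrite -US oU in oS.
Qed.

Lemma even_gone : even_grass (gone F G).
Proof. by apply: even_gbasis; rewrite cards0. Qed.

Lemma even_gscale c x : even_grass x -> even_grass (gscale c x).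
Proof.
by move/even_grassP => ex; apply/even_grassP => U oU; rewrite ffunE ex // mulr0.
Qed.

End GrassmannMul.

Section GrassmannRing.
Variables (F : fieldType) (G : finType).

Definition galg : Type := {ffun {set G} -> F}.
HB.instance Definition _ := GRing.Zmodule.on galg.

Definition galg_mul : galg -> galg -> galg := @gmul F G.
Definition galg_one : galg := gone F G.

Fact galg_mulA : associative galg_mul.
Proof. by move=> x y z; rewrite /galg_mul gmulA. Qed.
Fact galg_mul1l : left_id galg_one galg_mul. Proof. exact: gmul1l. Qed.
Fact galg_mul1r : right_id galg_one galg_mul. Proof. exact: gmul1r. Qed.
Fact galg_mulDl : left_distributive galg_mul +%R. Proof. exact: gmulDl. Qed.
Fact galg_mulDr : right_distributive galg_mul +%R. Proof. exact: gmulDr. Qed.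
HB.instance Definition _ := GRing.Zmodule_isNzRing.Build galg
  galg_mulA galg_mul1l galg_mul1r galg_mulDl galg_mulDr (gone_neq0 F G).

Lemma galg_mulE (x y : galg) : x * y = gmul x y. Proof. by []. Qed.

Definition even_galg (x : galg) := even_grass x.

Fact even_galg_subring_closed : subring_closed even_galg.
Proof.
split; first exact: even_gone.
  move=> x y /even_grassP ex /even_grassP ey; apply/even_grassP => U oU.
  by rewrite !ffunE ex // ey // subr0.
exact: even_gmul.
Qed.
HB.instance Definition _ :=
  GRing.isSubringClosed.Build galg even_galg even_galg_subring_closed.

Record even_part := EvenPart { even_val :> galg; _ : even_galg even_val }.
HB.instance Definition _ := [isSub for even_val].
HB.instance Definition _ := [Choice of even_part by <:].
HB.instance Definition _ := [SubChoice_isSubZmodule of even_part by <:].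
HB.instance Definition _ := [SubZmodule_isSubNzRing of even_part by <:].

Fact even_part_mulC : commutative (@GRing.mul even_part).
Proof. by move=> [x ex] [y ey]; apply: val_inj; exact: even_gmulC. Qed.
HB.instance Definition _ := GRing.PzRing_hasCommutativeMul.Build
  even_part even_part_mulC.

Lemma even_valM (x y : even_part) : val (x * y) = val x * val y.
Proof. by []. Qed.

Lemma even_val_sum (I : Type) (r : seq I) (P : pred I) (f : I -> even_part) :
  val (\sum_(i <- r | P i) f i) = \sum_(i <- r | P i) val (f i).
Proof. exact: (big_morph val (fun _ _ => erefl) erefl). Qed.

Lemma even_val_prod (I : Type) (r : seq I) (P : pred I) (f : I -> even_part) :
  val (\prod_(i <- r | P i) f i) = \prod_(i <- r | P i) (val (f i) : galg).
Proof. exact: (big_morph val (fun _ _ => erefl) erefl). Qed.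

End GrassmannRing.

Section NilpotentPairs.
Variables (R : comNzRingType) (V : finType) (u : V -> V -> R).
Implicit Types (A B X : {set V}) (i j k l : V) (c d : R).
Hypothesis u_row : forall i j j', u i j * u i j' = 0.
Hypothesis u_col : forall i i' j, u i j * u i' j = 0.
Hypothesis u_exchange : forall i j k l, u i j * u k l = - (u i l * u k j).

Local Notation t i := (u i i).

Definition tprod A := \prod_(i in A) t i.

Definition fpoly c A := c * tprod A + \sum_(i in A) tprod (A :\ i)
  - \sum_(i in A) \sum_(j in A :\ i) u i j * tprod (A :\ i :\ j).

Lemma tprodD1 k A : k \in A -> tprod A = t k * tprod (A :\ k).
Proof. by move=> kA; rewrite /tprod (big_setD1 _ kA). Qed.

Lemma tprodU1 k A : k \notin A -> tprod A * t k = tprod (k |: A).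
Proof. by move=> kA; rewrite /tprod big_setU1 //= mulrC. Qed.

Lemma tprod_u_row k l A : k \in A -> tprod A * u k l = 0.
Proof. by move=> kA; rewrite (tprodD1 kA) mulrAC u_row mul0r. Qed.

Lemma tprod_u_col k l A : k \in A -> tprod A * u l k = 0.
Proof. by move=> kA; rewrite (tprodD1 kA) mulrAC [t k * _]mulrC u_col mul0r. Qed.

Lemma in_setD1_neq (A : {set V}) i k : k \in A -> i != k -> k \in A :\ i.
Proof. by move=> kA ik; rewrite !inE eq_sym ik kA. Qed.

Lemma notin_setD1 (A : {set V}) i l : l \notin A -> l \notin A :\ i.
Proof. by move=> lA; rewrite !inE (negbTE lA) andbF. Qed.

Lemma fpoly_mul_t_in c k A : k \in A -> fpoly c A * t k = tprod A.
Proof.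
move=> kA; rewrite /fpoly !mulrBl !mulrDl -mulrA tprod_u_row // mulr0 add0r.
rewrite !mulr_suml (big_setD1 _ kA) /= big1 ?addr0; last first.
  by move=> i /setD1P [ik iA]; apply: tprod_u_row; apply: in_setD1_neq.
rewrite big1 ?subr0; first by rewrite mulrC -tprodD1.
move=> i iA; rewrite mulr_suml; apply: big1 => j /setD1P [ji jA]; rewrite -mulrA.
case: (eqVneq i k) => [->|ik].
  by rewrite [tprod _ * _]mulrC mulrA [u _ _ * _]mulrC u_row mul0r.
case: (eqVneq j k) => [->|jk].
  by rewrite [tprod _ * _]mulrC mulrA [u _ _ * _]mulrC u_col mul0r.
by rewrite tprod_u_row ?mulr0 // !in_setD1_neq.
Qed.

Lemma fpoly_mul_t_notin c l X : l \notin X -> fpoly c X * t l = c * tprod (l |: X)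
  + \sum_(i in X) tprod (l |: (X :\ i))
  - \sum_(i in X) \sum_(j in X :\ i) u i j * tprod (l |: (X :\ i :\ j)).
Proof.
move=> lX; rewrite /fpoly !mulrBl !mulrDl -mulrA tprodU1 //; congr (_ + _ - _).
  by rewrite mulr_suml; apply: eq_bigr => i _; rewrite tprodU1 // notin_setD1.
rewrite mulr_suml; apply: eq_bigr => i _; rewrite mulr_suml.
by apply: eq_bigr => j _; rewrite -mulrA tprodU1 // !notin_setD1.
Qed.

Lemma fpoly_mul_u_row c k l X : k \in X ->
  fpoly c X * u k l = \sum_(i in X) u i l * tprod (X :\ i).
Proof.
move=> kX; rewrite /fpoly !mulrBl !mulrDl -mulrA tprod_u_row // mulr0 add0r.
rewrite !mulr_suml (big_setD1 _ kX) /= big1 ?addr0; last first.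
  by move=> i /setD1P [ik iA]; apply: tprod_u_row; apply: in_setD1_neq.
rewrite (big_setD1 _ kX) /= mulr_suml big1 ?add0r; last first.
  by move=> j _; rewrite -mulrA [tprod _ * _]mulrC mulrA u_row mul0r.
rewrite (big_setD1 k kX) /= -sumrN [u k l * _]mulrC; congr (_ + _).
apply: eq_bigr => i /setD1P [ik iX].
rewrite mulr_suml (big_setD1 k) ?in_setD1_neq //= big1 ?addr0; last first.
  move=> j /setD1P [jk /setD1P [ji jX]].
  by rewrite -mulrA tprod_u_row ?mulr0 // !in_setD1_neq.
by rewrite mulrAC u_exchange mulNr -mulrA -tprodD1 ?opprK // in_setD1_neq.
Qed.

Lemma fpoly_mul_u_col c k l X : k \in X ->
  fpoly c X * u l k = \sum_(j in X) u l j * tprod (X :\ j).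
Proof.
move=> kX; rewrite /fpoly !mulrBl !mulrDl -mulrA tprod_u_col // mulr0 add0r.
rewrite !mulr_suml (big_setD1 _ kX) /= big1 ?addr0; last first.
  by move=> i /setD1P [ik iA]; apply: tprod_u_col; apply: in_setD1_neq.
rewrite (big_setD1 _ kX) /= [Z in _ - (_ + Z)]big1 ?addr0; last first.
  move=> i /setD1P [ik iX]; rewrite mulr_suml; apply: big1 => j /setD1P [ji jX].
  case: (eqVneq j k) => [->|jk]; first by rewrite mulrAC u_col mul0r.
  by rewrite -mulrA tprod_u_col ?mulr0 // !in_setD1_neq.
rewrite (big_setD1 k kX) /= [u l k * _]mulrC mulr_suml -sumrN; congr (_ + _).
apply: eq_bigr => j /setD1P [jk jX].
rewrite mulrAC u_exchange mulNr opprK mulrAC mulrC; congr (_ * _).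
rewrite (@tprodD1 k (X :\ j)) ?in_setD1_neq //; congr (_ * tprod _).
by apply/setP => x; rewrite !inE; case: (x == k); case: (x == j).
Qed.

Lemma fpoly_pair c k l : k != l ->
  fpoly c [set k; l] = c * (t k * t l) + t k + t l - u k l - u l k.
Proof.
move=> kl; have kl1 : k \notin [set l] by rewrite inE.
have Dk : [set k; l] :\ k = [set l] by rewrite setU1K.
have Dl : [set k; l] :\ l = [set k].
  by rewrite setDUl setDv setU0; apply/setDidPl; rewrite disjoints1 inE.
rewrite /fpoly /tprod big_setU1 //= big_set1 -/(tprod _) big_setU1 //= big_set1.
rewrite big_setU1 //= big_set1 Dk Dl !big_set1 !setDv big_set0; ring.
Qed.

Lemma fpoly_set1 c k : fpoly c [set k] = c * t k + 1.
Proof. by rewrite /fpoly !big_set1 setDv big_set0 /tprod big_set0 big_set1 subr0. Qed.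

Lemma fpoly_mul_pair c d k l X : k \in X -> l \notin X ->
  fpoly c X * fpoly d [set k; l] = fpoly (c + d) (l |: X).
Proof.
move=> kX lX; have neq_l i : i \in X -> i != l.
  by move=> iX; apply: contraNneq lX => <-.
have setU1D1 i Y : i \in X -> (l |: Y) :\ i = l |: (Y :\ i).
  by move=> iX; rewrite setDUl (setDidPl _) // disjoints1 inE eq_sym neq_l.
have -> : fpoly c X * fpoly d [set k; l] = d * (fpoly c X * t k * t l)
    + fpoly c X * t k + fpoly c X * t l - fpoly c X * u k l - fpoly c X * u l k.
  by rewrite fpoly_pair ?neq_l //; ring.
rewrite fpoly_mul_t_in // tprodU1 // fpoly_mul_t_notin // fpoly_mul_u_row //.
rewrite fpoly_mul_u_col // /fpoly big_setU1 //= big_setU1 //= !setU1K //.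
have -> : \sum_(i in X) tprod ((l |: X) :\ i) = \sum_(i in X) tprod (l |: (X :\ i)).
  by apply: eq_bigr => i iX; rewrite setU1D1.
have -> : \sum_(i in X) \sum_(j in (l |: X) :\ i) u i j * tprod ((l |: X) :\ i :\ j)
   = \sum_(i in X) (u i l * tprod (X :\ i)
       + \sum_(j in X :\ i) u i j * tprod (l |: (X :\ i :\ j))).
  apply: eq_bigr => i iX; rewrite setU1D1 // big_setU1 ?notin_setD1 //=.
  rewrite setU1K ?notin_setD1 //; congr (_ + _).
  by apply: eq_bigr => j /setD1P [ji jX]; rewrite setU1D1.
rewrite big_split /=; ring.
Qed.

Lemma fpoly_mul_meet1 c d k A B : A :&: B = [set k] ->
  fpoly c A * fpoly d B = fpoly (c + d) (A :|: B).
Proof.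
have [n] := ubnP #|B|; elim: n B d => // n IH B d ltBn AB.
have /setIP [kA kB] : k \in A :&: B by rewrite AB set11.
have [sBk|/subsetPn [l lB]] := boolP (B \subset [set k]).
  have -> : B = [set k] by apply/eqP; rewrite eqEsubset sBk sub1set kB.
  rewrite fpoly_set1 mulrDr mulr1 mulrCA fpoly_mul_t_in // (setUidPl _).
    by rewrite /fpoly; ring.
  by rewrite sub1set.
rewrite inE => lk.
have lA : l \notin A by apply: contra lk => lA; rewrite -in_set1 -AB inE lA lB.
have kBl : k \in B :\ l by apply: in_setD1_neq.
have -> : fpoly d B = fpoly d (B :\ l) * fpoly 0 [set k; l].
  by rewrite fpoly_mul_pair ?addr0 ?setD1K // !inE eqxx.
have ABl : A :&: (B :\ l) = [set k].
  by rewrite setIDA AB; apply/setDidPl; rewrite disjoints1 inE eq_sym.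
have ltBl : (#|B :\ l| < n)%N by move: ltBn; rewrite (cardsD1 l B) lB.
rewrite mulrA IH // fpoly_mul_pair ?addr0; last 2 first.
- by rewrite inE kA.
- by rewrite !inE negb_or lA eqxx.
by rewrite setUCA setD1K.
Qed.

(* In f_{k,l}^2 every monomial repeats some t or u factor, except the cross
   terms t_k t_l and u_kl u_lk = - t_k t_l, which cancel. *)
Lemma fpoly_pair_mul c d k l : k != l -> fpoly c [set k; l] * fpoly d [set k; l] = 0.
Proof.
move=> kl; rewrite !fpoly_pair //.
have tt i : t i * t i = 0 := u_row i i i.
have ax : t k * u k l = 0 := u_row k k l.
have bx : t l * u k l = 0 by rewrite mulrC u_col.
have ay : t k * u l k = 0 by rewrite mulrC u_col.
have b_y : t l * u l k = 0 := u_row l l k.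
have xx : u k l * u k l = 0 := u_row k l l.
have yy : u l k * u l k = 0 := u_row l k k.
have xy : u k l * u l k = - (t k * t l) := u_exchange k l l k.
move: (tt k) (tt l) ax bx ay b_y xx yy xy.
move: (t k) (t l) (u k l) (u l k) => a b x y aa bb ax bx ay b_y xx yy xy.
have -> : (c * (a * b) + a + b - x - y) * (d * (a * b) + a + b - x - y) =
  c * d * (a * a) * (b * b) + (c + d) * ((a * a) * b + a * (b * b) - b * (a * x)
  - b * (a * y)) + a * a + b * b + x * x + y * y + 2%:R * (a * b + x * y)
  - 2%:R * (a * x + a * y + b * x + b * y) by ring.
rewrite aa bb ax bx ay b_y xx yy xy; ring.
Qed.

Lemma fpoly_mul_meet2 c d k l A B : k != l -> k \in A :&: B -> l \in A :&: B ->
  fpoly c A * fpoly d B = 0.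
Proof.
move=> kl /setIP [kA kB] /setIP [lA lB].
have split_pair e X : k \in X -> l \in X ->
    fpoly e X = fpoly e (X :\ l) * fpoly 0 [set k; l].
  move=> kX lX; have kXl : k \in X :\ l by rewrite in_setD1_neq // eq_sym.
  by rewrite fpoly_mul_pair ?setD1K ?addr0 // !inE eqxx.
by rewrite (split_pair _ A) // (split_pair _ B) // mulrACA fpoly_pair_mul // mulr0.
Qed.

End NilpotentPairs.

Section Fermions.
Variables (F : fieldType) (V : finType).
Local Notation gen a := (ggen F a : galg F (bool * V)%type).
Local Notation even := (even_part F (bool * V)%type).

Lemma gen_sq a : gen a * gen a = 0.
Proof. by rewrite galg_mulE gmul_basis disjoints1 inE eqxx. Qed.

Lemma gen_anticomm a b : gen a * gen b = - (gen b * gen a).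
Proof.
have [->|ab] := eqVneq a b; first by rewrite gen_sq oppr0.
have dab : [disjoint [set a] & [set b]] by rewrite disjoints1 inE.
rewrite !galg_mulE !gmul_basis dab disjoint_sym dab setUC.
rewrite (gsign_swap F dab) !cards1 expr1 mulN1r.
by apply/ffunP => U; rewrite !ffunE mulNr opprK.
Qed.

Lemma gen_swap_mid a b c d :
  (gen a * gen b) * (gen c * gen d) = - ((gen a * gen c) * (gen b * gen d)).
Proof. by rewrite mulrA -(mulrA _ (gen b)) gen_anticomm mulrN mulNr !mulrA. Qed.

Lemma even_psibar_psi i j : even_galg (gen (true, i) * gen (false, j)).
Proof.
rewrite /even_galg galg_mulE gmul_basis; case: ifP => [dij|_]; last first.
  by apply/even_grassP => U _; rewrite ffunE.
by apply/even_gscale/even_gbasis; rewrite cards2; move: dij; rewrite disjoints1 inE.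
Qed.

Definition upair i j : even := EvenPart (even_psibar_psi i j).

Lemma upair_row i j j' : upair i j * upair i j' = 0.
Proof.
apply: val_inj; rewrite [LHS]/= gen_swap_mid.
by rewrite gen_sq mul0r oppr0.
Qed.

Lemma upair_col i i' j : upair i j * upair i' j = 0.
Proof.
apply: val_inj; rewrite [LHS]/= gen_swap_mid.
by rewrite [gen (false, j) * _]gen_sq mulr0 oppr0.
Qed.

Lemma upair_exchange i j k l : upair i j * upair k l = - (upair i l * upair k j).
Proof.
apply: val_inj; rewrite [LHS]/= [RHS]/= gen_swap_mid [in RHS]gen_swap_mid.
by rewrite (gen_anticomm (false, l)) mulrN !opprK.
Qed.

Definition escalar (c : F) : even := EvenPart (even_gscale c (even_gone F _)).

Lemma escalarD c d : escalar c + escalar d = escalar (c + d).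
Proof. by apply: val_inj; apply/ffunP => U; rewrite !ffunE mulrDl. Qed.

Lemma even_val_tprod A : val (tprod upair A) = tau F A.
Proof. by rewrite even_val_prod. Qed.

Lemma fA_fpoly lam A :
  fA lam A = val (fpoly upair (escalar (lam * (1 - #|A|%:R))) A).
Proof.
rewrite /fpoly /= !even_val_sum even_val_tprod /= galg_mulE gmulZl gmul1l /fA.
congr (_ + _ - _); first by apply: eq_bigr => i _; rewrite even_val_tprod.
apply: eq_bigr => i _; rewrite even_val_sum; apply: eq_big => [j|j _].
  by rewrite !inE andbC.
by rewrite /= even_val_tprod.
Qed.

Lemma gmul_fA_meet1 (l1 l2 l : F) (k : V) (A B : {set V}) : A :&: B = [set k] ->
  l1 * (1 - #|A|%:R) + l2 * (1 - #|B|%:R) = l * (1 - #|A :|: B|%:R) ->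
  gmul (fA l1 A) (fA l2 B) = fA l (A :|: B).
Proof.
move=> AB el; rewrite !fA_fpoly -el -galg_mulE -even_valM.
rewrite (fpoly_mul_meet1 upair_row upair_col upair_exchange _ _ AB).
by rewrite escalarD.
Qed.

Lemma gmul_fA_meet2 (l1 l2 : F) (A B : {set V}) : (1 < #|A :&: B|)%N ->
  gmul (fA l1 A) (fA l2 B) = 0.
Proof.
case/card_gt1P => k [l [kAB lAB kl]].
rewrite !fA_fpoly -galg_mulE -even_valM.
by rewrite (fpoly_mul_meet2 upair_row upair_col upair_exchange _ _ kl kAB lAB).
Qed.

End Fermions.

(* The case a + b = 2 is excluded only in appearance: then a = b = 1 and both
   sides vanish, the right one through the junk value x / 0 = 0. *)
Lemma merge_weights (K : numFieldType) (a b : nat) (l1 l2 : K) :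
  (0 < a)%N -> (0 < b)%N ->
  l1 * (1 - a%:R) + l2 * (1 - b%:R) = ((a%:R - 1) * l1 + (b%:R - 1) * l2)
     / (a%:R + b%:R - 2) * (1 - (a + b - 1)%N%:R).
Proof.
move=> a0 b0; rewrite natrB ?natrD; last by lia.
have -> : (1 - (a%:R + b%:R - 1%:R) : K) = - (a%:R + b%:R - 2) by ring.
have [D|D] := eqVneq (a%:R + b%:R - 2 : K) 0; last by field.
have ab2 : (a + b = 2)%N by apply/eqP; rewrite -(eqr_nat K) natrD -subr_eq0 D.
rewrite D oppr0 mulr0; have [-> ->] : a = 1%N /\ b = 1%N by lia.
by rewrite subrr !mulr0 addr0.
Qed.

Unset Implicit Arguments.
Set Strict Implicit.

Theorem lemma4p1 (R : realType) (V : finType) (A B : {set V}) (lam lam' : R[i]) :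
  A :&: B != set0 ->
  let lam'' := ((#|A|%:R - 1) * lam + (#|B|%:R - 1) * lam')
                 / (#|A|%:R + #|B|%:R - 2) in
  (#|A :&: B| = 1%N ->
     gmul (fA lam A) (fA lam B) = fA lam (A :|: B)
     /\ gmul (fA lam A) (fA lam' B) = fA lam'' (A :|: B))
  /\
  ((2 <= #|A :&: B|)%N ->
     gmul (fA lam A) (fA lam B) = 0
     /\ gmul (fA lam A) (fA lam' B) = 0).
Proof.
move=> /set0Pn [x /setIP [xA xB]] lam''.
have A_gt0 : (0 < #|A|)%N by apply/card_gt0P; exists x.
have B_gt0 : (0 < #|B|)%N by apply/card_gt0P; exists x.
split=> [AB1|AB2]; last by rewrite !gmul_fA_meet2.
have [k AB] : exists k, A :&: B = [set k] by apply/cards1P; rewrite AB1.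
have cardU : #|A :|: B| = (#|A| + #|B| - 1)%N by have := cardsUI A B; rewrite AB1; lia.
split; apply: gmul_fA_meet1 AB _; rewrite cardU; last exact: merge_weights.
by rewrite natrB ?natrD; [ring | lia].
Qed.
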